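(* Let $N$ be a nontrivial normal subgroup of $G_2$. If $\phi(N)\simeq S_8$, then $N=G_2$.
   Context: The $2\times2\times2$ Rubik's cube consists of 8 corner cubelets, each carrying 3 colored stickers. Corner positions are numbered 1 = top-front-left, 2 = top-front-right, 3 = top-back-left, 4 = top-back-right, 5 = bottom-front-left, 6 = bottom-front-right, 7 = bottom-back-left, 8 = bottom-back-right. $G_2$ is the subgroup of the symmetric group on the 24 stickers generated by the six moves $u,d,f,b,l,r$ rotating respectively the top, bottom, front, back, left, right layer of four cubelets by $90^\circ$ clockwise as seen from outside facing that face. $\phi:G_2\to S_8$ records the permutation of corner positions. *)

From mathcomp Require Import all_boot all_fingroup.
Set Implicit Arguments. Unset Strict Implicit. Unset Printing Implicit Defensive.

(* Corner positions: 'I_8, with i : 'I_8 standing for position i+1 of the paper: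
   1 = top-front-left, 2 = top-front-right, 3 = top-back-left, 4 = top-back-right,
   5 = bottom-front-left, 6 = bottom-front-right, 7 = bottom-back-left,
   8 = bottom-back-right.
   Axes: 'I_3, 0 = x (left/right), 1 = y (front/back), 2 = z (top/bottom).
   A sticker is a pair (corner position, axis): the sticker of the cubelet in
   that corner lying on the face of the cube orthogonal to that axis. *)
Definition sticker : finType := ('I_8 * 'I_3)%type.

(* A quarter turn of a layer: corners of the layer are cycled according to the
   table [tbl] (in 1-based labels; corners off the layer are fixed points of the
   table), and, since the rotation is a quarter turn about an axis k, the two
   axes other than k are exchanged (given by the table [ax] on 0-based axes). *)
Definition move_fun (tbl : seq nat) (ax : seq nat) (s : sticker) : sticker :=
  let c := (nat_of_ord s.1).+1 in
  if nth 0 tbl c.-1 != c then (inord (nth 0 tbl c.-1).-1, inord (nth 0 ax s.2))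
  else s.

(* Corner cycles (clockwise as seen from outside the face):
   u : 1->3->4->2->1   d : 5->6->8->7->5   f : 1->2->6->5->1
   b : 3->7->8->4->3   l : 1->5->7->3->1   r : 2->4->8->6->2 *)
Definition tbl_u := [:: 3; 1; 4; 2; 5; 6; 7; 8].
Definition tbl_d := [:: 1; 2; 3; 4; 6; 8; 5; 7].
Definition tbl_f := [:: 2; 6; 3; 4; 1; 5; 7; 8].
Definition tbl_b := [:: 1; 2; 7; 3; 5; 6; 8; 4].
Definition tbl_l := [:: 5; 2; 1; 4; 7; 6; 3; 8].
Definition tbl_r := [:: 1; 4; 3; 8; 5; 2; 7; 6].
Definition swap_xy := [:: 1; 0; 2].
Definition swap_xz := [:: 2; 1; 0].
Definition swap_yz := [:: 0; 2; 1].

Definition tbl_u' := [:: 2; 4; 1; 3; 5; 6; 7; 8].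
Definition tbl_d' := [:: 1; 2; 3; 4; 7; 5; 8; 6].
Definition tbl_f' := [:: 5; 1; 3; 4; 6; 2; 7; 8].
Definition tbl_b' := [:: 1; 2; 4; 8; 5; 6; 3; 7].
Definition tbl_l' := [:: 3; 2; 7; 4; 1; 6; 5; 8].
Definition tbl_r' := [:: 1; 6; 3; 2; 5; 8; 7; 4].

Lemma u_inj : injective (move_fun tbl_u swap_xy).
Proof.
apply: (can_inj (g := move_fun tbl_u' swap_xy)).
case=> [[c Hc] [a Ha]].
do 8?[case: c Hc => [|c] Hc]; do 3?[case: a Ha => [|a] Ha] => //;
  apply/eqP; rewrite /move_fun /= ?inordK //= xpair_eqE -!val_eqE /= ?inordK //.
Qed.

Lemma d_inj : injective (move_fun tbl_d swap_xy).
Proof.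
apply: (can_inj (g := move_fun tbl_d' swap_xy)).
case=> [[c Hc] [a Ha]].
do 8?[case: c Hc => [|c] Hc]; do 3?[case: a Ha => [|a] Ha] => //;
  apply/eqP; rewrite /move_fun /= ?inordK //= xpair_eqE -!val_eqE /= ?inordK //.
Qed.

Lemma f_inj : injective (move_fun tbl_f swap_xz).
Proof.
apply: (can_inj (g := move_fun tbl_f' swap_xz)).
case=> [[c Hc] [a Ha]].
do 8?[case: c Hc => [|c] Hc]; do 3?[case: a Ha => [|a] Ha] => //;
  apply/eqP; rewrite /move_fun /= ?inordK //= xpair_eqE -!val_eqE /= ?inordK //.
Qed.

Lemma b_inj : injective (move_fun tbl_b swap_xz).
Proof.
apply: (can_inj (g := move_fun tbl_b' swap_xz)).
case=> [[c Hc] [a Ha]].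
do 8?[case: c Hc => [|c] Hc]; do 3?[case: a Ha => [|a] Ha] => //;
  apply/eqP; rewrite /move_fun /= ?inordK //= xpair_eqE -!val_eqE /= ?inordK //.
Qed.

Lemma l_inj : injective (move_fun tbl_l swap_yz).
Proof.
apply: (can_inj (g := move_fun tbl_l' swap_yz)).
case=> [[c Hc] [a Ha]].
do 8?[case: c Hc => [|c] Hc]; do 3?[case: a Ha => [|a] Ha] => //;
  apply/eqP; rewrite /move_fun /= ?inordK //= xpair_eqE -!val_eqE /= ?inordK //.
Qed.

Lemma r_inj : injective (move_fun tbl_r swap_yz).
Proof.
apply: (can_inj (g := move_fun tbl_r' swap_yz)).
case=> [[c Hc] [a Ha]].
do 8?[case: c Hc => [|c] Hc]; do 3?[case: a Ha => [|a] Ha] => //;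
  apply/eqP; rewrite /move_fun /= ?inordK //= xpair_eqE -!val_eqE /= ?inordK //.
Qed.

Definition mu : {perm sticker} := perm u_inj.
Definition md : {perm sticker} := perm d_inj.
Definition mf : {perm sticker} := perm f_inj.
Definition mb : {perm sticker} := perm b_inj.
Definition ml : {perm sticker} := perm l_inj.
Definition mr : {perm sticker} := perm r_inj.

Definition G2 : {group {perm sticker}} :=
  <<[set mu; md; mf; mb; ml; mr]>>%G.

(* For permutations that do not induce a permutation of positions (none of
   them lie in G2) the value is the identity. *)
Definition corner_fun (g : {perm sticker}) : {ffun 'I_8 -> 'I_8} :=
  [ffun c => (g (c, ord0)).1].
Definition phi (g : {perm sticker}) : {perm 'I_8} :=
  insubd (1%g : {perm 'I_8}) (corner_fun g).

(* Each element of G2 moves every cubelet to a new position and turns it in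
   place: in suitable orientation coordinates it is a permutation of the corners
   together with a vector of twists in (Z/3)^8 of sum 0, and phi reads off the
   permutation, so the kernel of phi consists of pure twists.  If phi(N) = S8,
   take n in N moving the corners as the transposition (1 8); its commutator
   with an explicit element of G2 twisting corners 1 and 2 is the pure twist
   +1 at 1, -1 at 8.  Conjugating by N, which realises all of S8, gives every
   such pair twist; these generate the sum-zero twists, so ker phi <= N and
   G2 = N (ker phi) = N. *)

From mathcomp Require Import all_boot all_fingroup ssralg zmodp.
Set Implicit Arguments. Unset Strict Implicit. Unset Printing Implicit Defensive.
Import GRing.Theory.
Local Open Scope group_scope.
Local Open Scope ring_scope.

(* Corner c sits at coordinates (x, y, z) with c = x + 2y + 4z; on the corners
   with x + y + z odd the three axes occur in the opposite rotational order.
   [orient] numbers the stickers of a corner from its U/D sticker (axis 2) in a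
   fixed rotational sense, whence the parity-dependent formula. *)
Definition odd_corner (c : 'I_8) : bool := val c \in [:: 1; 2; 4; 7]%N.

Definition orient (s : sticker) : 'Z_3 :=
  if odd_corner s.1 then 2 - s.2 else s.2 - 2.

Definition sticker_of (c : 'I_8) (i : 'Z_3) : sticker :=
  (c, if odd_corner c then 2 - i else i + 2).

Lemma orient_sticker_of c i : orient (sticker_of c i) = i.
Proof.
by rewrite /orient /=; case: odd_corner; rewrite (opprB, addrK) // addrC subrK.
Qed.

Lemma sticker_of_orient s : sticker_of s.1 (orient s) = s.
Proof.
case: s => c a; rewrite /sticker_of /orient /=.
by case: odd_corner; rewrite (opprB, subrK) // addrC subrK.
Qed.

Section Legal.
Variable f : sticker -> sticker.

Definition corner (c : 'I_8) : 'I_8 := (f (c, ord0)).1.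
Definition twist (c : 'I_8) : 'Z_3 := orient (f (sticker_of c 0)).
Definition legal : bool :=
  [forall s, f s == sticker_of (corner s.1) (orient s + twist s.1)]
  && (\sum_c twist c == 0).

Lemma legalE :
  legal -> forall s, f s = sticker_of (corner s.1) (orient s + twist s.1).
Proof. by case/andP=> /forallP H _ s; apply/eqP. Qed.

Lemma legal_sum_twist : legal -> \sum_c twist c = 0.
Proof. by case/andP=> _ /eqP. Qed.

End Legal.

Lemma eq_legal f f' : f =1 f' -> legal f = legal f'.
Proof.
move=> E; rewrite /legal /corner /twist.
congr (_ && _); first by apply: eq_forallb => s; rewrite !E.
by congr (_ == _); apply: eq_bigr => c _; rewrite E.
Qed.

Lemma corner1 c : corner (1%g : {perm sticker}) c = c.
Proof. by rewrite /corner perm1. Qed.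

Lemma twist1 c : twist (1%g : {perm sticker}) c = 0.
Proof. by rewrite /twist perm1 orient_sticker_of. Qed.

Lemma legal1 : legal (1%g : {perm sticker}).
Proof.
apply/andP; split; last by rewrite big1 // => c _; rewrite twist1.
by apply/forallP=> s; rewrite perm1 corner1 twist1 addr0 sticker_of_orient.
Qed.

Lemma cornerM (g h : {perm sticker}) c :
  legal h -> corner (g * h)%g c = corner h (corner g c).
Proof. by move=> Lh; rewrite {1}/corner permM (legalE Lh). Qed.

Lemma twistM (g h : {perm sticker}) c :
  legal g -> legal h -> twist (g * h)%g c = twist g c + twist h (corner g c).
Proof.
move=> Lg Lh; rewrite {1}/twist permM (legalE Lg) (legalE Lh) /=.
by rewrite !orient_sticker_of add0r.
Qed.

Lemma corner_inj (g : {perm sticker}) : legal g -> injective (corner g).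
Proof.
move=> Lg c d Ecd.
have : g (sticker_of c 0) = g (sticker_of d (twist g c - twist g d)).
  by rewrite !(legalE Lg) /= !orient_sticker_of Ecd add0r subrK.
by move/perm_inj/(congr1 fst).
Qed.

Lemma legalM (g h : {perm sticker}) : legal g -> legal h -> legal (g * h)%g.
Proof.
move=> Lg Lh; apply/andP; split.
  apply/forallP=> s; rewrite permM (legalE Lg) (legalE Lh) /= orient_sticker_of.
  by rewrite cornerM // twistM // addrA.
rewrite (eq_bigr _ (fun c _ => twistM c Lg Lh)) big_split /=.
rewrite -(reindex_inj (P := xpredT) (F := twist h) (corner_inj Lg)) /=.
by rewrite !legal_sum_twist // addr0.
Qed.

Definition legal_perms : {set {perm sticker}} :=
  [set g : {perm sticker} | legal g].

Lemma legal_perms_group_set : group_set legal_perms.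
Proof.
apply/group_setP; split=> [|g h]; first by rewrite inE legal1.
by rewrite !inE; apply: legalM.
Qed.

Canonical legal_group := Group legal_perms_group_set.

Lemma legal_eq (g h : {perm sticker}) :
  legal g -> legal h -> corner g =1 corner h -> twist g =1 twist h -> g = h.
Proof.
by move=> Lg Lh Ec Et; apply/permP => s; rewrite (legalE Lg) (legalE Lh) Ec Et.
Qed.

Lemma phiE (g : {perm sticker}) : legal g -> phi g =1 corner g.
Proof.
move=> Lg c; have inj : injectiveb (corner_fun g).
  by apply/injectiveP => a b; rewrite !ffunE; apply: corner_inj.
by rewrite /phi -pvalE insubdK // ffunE.
Qed.

Lemma phiM : {in legal_perms &, {morph phi : g h / g * h}}%g.
Proof.
move=> g h; rewrite !inE => Lg Lh; apply/permP => c.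
by rewrite permM !phiE ?legalM // cornerM.
Qed.

Canonical phi_morphism := Morphism phiM.

Lemma ker_phiP (g : {perm sticker}) :
  reflect (legal g /\ corner g =1 id) (g \in 'ker phi).
Proof.
apply: (iffP idP) => [Kg | [Lg Cg]].
  have Lg : legal g by have := dom_ker Kg; rewrite inE.
  by split=> // c; rewrite -phiE // (mker Kg) perm1.
by apply/kerP; rewrite ?inE //; apply/permP => c; rewrite phiE // perm1 Cg.
Qed.

Lemma twist_kerM (g h : {perm sticker}) c :
  g \in 'ker phi -> h \in legal_perms ->
  twist (g * h)%g c = twist g c + twist h c.
Proof. by case/ker_phiP=> Lg Cg; rewrite inE => Lh; rewrite twistM // Cg. Qed.

Lemma twist_kerX (g : {perm sticker}) n c :
  g \in 'ker phi -> twist (g ^+ n)%g c = twist g c *+ n.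
Proof.
move=> Kg; elim: n => [|n IHn]; first by rewrite expg0 twist1.
by rewrite expgSr twist_kerM ?groupX ?(dom_ker Kg) // IHn mulrSr.
Qed.

Lemma twist_kerV (g : {perm sticker}) c :
  g \in 'ker phi -> twist g^-1%g c = - twist g c.
Proof.
move=> Kg; apply/eqP.
by rewrite -addr_eq0 -twist_kerM ?groupV ?(dom_ker Kg) // mulVg twist1.
Qed.

Lemma twist_kerJ (g x : {perm sticker}) c :
  g \in 'ker phi -> x \in legal_perms ->
  twist (g ^ x)%g c = twist g ((phi x)^-1%g c).
Proof.
move=> Kg Dx; have [Lg _] := ker_phiP _ Kg.
have Lx : legal x by rewrite inE in Dx.
have Lx' : legal x^-1%g by have := groupVr Dx; rewrite inE.
rewrite conjgE twistM ?legalM // twist_kerM //.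
by rewrite -(morphV _ Dx) phiE // addrCA -twistM // mulVg twist1 addr0.
Qed.

Lemma ker_phi_eq (g h : {perm sticker}) :
  g \in 'ker phi -> h \in 'ker phi -> twist g =1 twist h -> g = h.
Proof.
case/ker_phiP=> Lg Cg /ker_phiP[Lh Ch] Et.
by apply: legal_eq => // c; rewrite Cg Ch.
Qed.

Lemma ker_phi_eq1 (g : {perm sticker}) :
  g \in 'ker phi -> (forall d, d != ord_max -> twist g d = 0) -> g = 1%g.
Proof.
move=> Kg Hg; apply: (ker_phi_eq Kg (group1 _)) => d.
have [Lg _] := ker_phiP _ Kg.
rewrite twist1; have [->|/Hg //] := eqVneq d ord_max.
have := legal_sum_twist Lg.
by rewrite (bigD1 ord_max) //= big1 ?addr0 // => c /Hg.
Qed.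

Definition pair_twist (a b c : 'I_8) : 'Z_3 := (c == a)%:R - (c == b)%:R.

Lemma pair_twist_perm (q : {perm 'I_8}) a b c :
  pair_twist a b (q^-1%g c) = pair_twist (q a) (q b) c.
Proof. by rewrite /pair_twist !(canF_eq (permKV q)). Qed.

Lemma exists_perm2 (T : finType) (a b c d : T) :
  a != b -> c != d -> exists q : {perm T}, q a = c /\ q b = d.
Proof.
move=> ab cd; exists (tperm a c * tperm (tperm a c b) d)%g.
rewrite !permM tpermL; split; last exact: tpermL.
apply: tpermD; last by rewrite eq_sym.
by rewrite (canF_eq (tpermK a c)) tpermR eq_sym.
Qed.

(* [inord] is defined through [insub], whose proof-carrying test blocks
   [vm_compute]; [inZp] computes, and so do the quantifiers below. *)
Definition move_fun_inZp (tbl ax : seq nat) (s : sticker) : sticker :=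
  let c := (nat_of_ord s.1).+1 in
  if nth 0 tbl c.-1 != c then (inZp (nth 0 tbl c.-1).-1, inZp (nth 0 ax s.2))
  else s.

Definition wf_move_tables (tbl ax : seq nat) : bool :=
  [&& size tbl == 8, all (fun k => 0 < k <= 8) tbl,
      size ax == 3 & all (fun k => k < 3) ax]%N.

Lemma move_funE tbl ax :
  wf_move_tables tbl ax -> move_fun tbl ax =1 move_fun_inZp tbl ax.
Proof.
case/and4P=> /eqP size_tbl /allP tbl_range /eqP size_ax /allP ax_range [c a].
have c_lt : ((nth 0 tbl c).-1 < 8)%N.
  have /tbl_range : nth 0 tbl c \in tbl by rewrite mem_nth // size_tbl.
  by case: (nth 0 tbl c) => //= k /andP[].
have a_lt : (nth 0 ax a < 3)%N by apply: ax_range; rewrite mem_nth // size_ax.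
rewrite /move_fun /move_fun_inZp /=; case: ifP => // _.
by congr pair; apply: val_inj; rewrite /= inordK // modn_small.
Qed.

Definition all_ord n (P : pred 'I_n.+1) : bool := all (P \o inZp) (iota 0 n.+1).

Lemma all_ordP n (P : pred 'I_n.+1) : all_ord P -> forall i, P i.
Proof.
by move/allP=> H i; have := H i; rewrite mem_iota ltn_ord /= valZpK; apply.
Qed.

Lemma legal_by_eval f :
  all_ord (fun c => all_ord (fun a =>
    f (c, a) == sticker_of (corner f c) (orient (c, a) + twist f c))) ->
  \sum_(c < 8) twist f c == 0 -> legal f.
Proof.
move=> /all_ordP H sum0; rewrite /legal sum0 andbT; apply/forallP => -[c a].
exact: (all_ordP (H c)).
Qed.

Lemma G2_legal : G2 \subset legal_perms.
Proof.
rewrite gen_subG; apply/subsetP => g.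
rewrite !inE => /orP[/orP[/orP[/orP[/orP[]|]|]|]|] /eqP ->;
  rewrite /mu /md /mf /mb /ml /mr (eq_legal (permE _));
  rewrite (eq_legal (move_funE _)) //;
  by apply: legal_by_eval; last rewrite !big_ord_recl big_ord0; vm_compute.
Qed.

Lemma legal_G2 g : g \in G2 -> legal g.
Proof. by move/(subsetP G2_legal); rewrite inE. Qed.

Definition turn (k : nat) : {perm sticker} :=
  nth 1%g [:: mu; md; mf; mb; ml; mr] k.

Definition turn_eval (k : nat) : sticker -> sticker :=
  nth id [:: move_fun_inZp tbl_u swap_xy; move_fun_inZp tbl_d swap_xy;
             move_fun_inZp tbl_f swap_xz; move_fun_inZp tbl_b swap_xz;
             move_fun_inZp tbl_l swap_yz; move_fun_inZp tbl_r swap_yz] k.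

Lemma turnE k : turn k =1 turn_eval k.
Proof.
move=> s; do 6?[case: k => [|k]];
  by rewrite /turn /turn_eval /= ?nth_nil ?perm1 // permE move_funE.
Qed.

Lemma turn_G2 k : turn k \in G2.
Proof.
rewrite /turn; do 6?[case: k => [|k]]; rewrite /= ?nth_nil ?group1 //;
  by apply: mem_gen; rewrite !inE eqxx ?orbT.
Qed.

Definition word (w : seq nat) : {perm sticker} := (\prod_(k <- w) turn k)%g.

Lemma word_G2 w : word w \in G2.
Proof. by apply: group_prod => k _; apply: turn_G2. Qed.

Lemma wordE w s : word w s = foldl (fun s k => turn_eval k s) s w.
Proof.
elim: w s => [|k w IHw] s; first by rewrite /word big_nil perm1.
by rewrite /word big_cons permM -/(word w) IHw turnE.
Qed.

Definition twister_word : seq nat :=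
  let u := [:: 0%N] in let d := [:: 1%N] in let r := [:: 5%N] in
  let inv w := w ++ w ++ w in
  flatten [:: inv r; inv d; r; d; inv r; inv d; r; d; inv u;
              inv d; inv r; d; r; inv d; inv r; d; r; u].

Definition twister : {perm sticker} := word twister_word.

Lemma corner_twister c : corner twister c = c.
Proof.
rewrite /corner wordE; apply/eqP; move: c; apply: all_ordP.
by vm_compute.
Qed.

Lemma twist_twister c : twist twister c = [:: 2; 1]`_c.
Proof.
rewrite /twist wordE; apply/eqP; move: c; apply: all_ordP.
by vm_compute.
Qed.

Lemma twister_G2 : twister \in G2.
Proof. exact: word_G2. Qed.

Lemma twister_ker : twister \in 'ker phi.
Proof.
by apply/ker_phiP; split; [apply: legal_G2 twister_G2 | apply: corner_twister].
Qed.

Section NormalSubgroup.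

Variable N : {group {perm sticker}}.
Hypotheses (nsNG : N <| G2) (phiN : phi @* N = setT).

Lemma phi_onto p : exists2 n, n \in N & phi n = p.
Proof.
have : p \in phi @* N by rewrite phiN inE.
by case/morphimP=> n _ Nn ->; exists n.
Qed.

Lemma pair_twist_ord0_max_in_N :
  exists2 m, m \in N :&: 'ker phi & twist m =1 pair_twist ord0 ord_max.
Proof.
have [n Nn phin] := phi_onto (tperm ord0 ord_max).
have Gn := subsetP (normal_sub nsNG) n Nn.
have Dn : n \in legal_perms by rewrite inE legal_G2.
have Nm : [~ twister, n] \in N.
  rewrite commgEr groupM ?memJ_norm ?groupV //.
  exact: subsetP (normal_norm nsNG) twister twister_G2.
have Km : [~ twister, n] \in 'ker phi.
  rewrite commgEl groupM ?groupV ?memJ_norm ?twister_ker //.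
  exact: subsetP (ker_norm phi_morphism) n Dn.
exists [~ twister, n]; first by rewrite inE Nm Km.
have DtJ : twister ^ n \in legal_perms.
  by rewrite inE legal_G2 // groupJ ?twister_G2.
move=> c; rewrite commgEl twist_kerM ?groupV ?twister_ker //.
rewrite twist_kerV ?twister_ker // twist_kerJ ?twister_ker // phin tpermV.
rewrite /pair_twist; case: tpermP => [->|->|/eqP/negPf-> /eqP/negPf->];
  by rewrite ?addNr ?subrr // !twist_twister; apply/eqP; vm_compute.
Qed.

Lemma pair_twist_in_N a b :
  exists2 e, e \in N :&: 'ker phi & twist e =1 pair_twist a b.
Proof.
have [<-|ab] := eqVneq a b.
  by exists 1%g; rewrite ?group1 // => c; rewrite twist1 /pair_twist subrr.
have [q [qa qb]] := exists_perm2 (isT : ord0 != ord_max :> 'I_8) ab.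
have [n Nn phin] := phi_onto q.
have [m /setIP[Nm Km] twist_m] := pair_twist_ord0_max_in_N.
have Dn : n \in legal_perms.
  by rewrite inE legal_G2 // (subsetP (normal_sub nsNG)).
exists (m ^ n).
  by rewrite inE groupJ // memJ_norm // (subsetP (ker_norm _)).
by move=> c; rewrite twist_kerJ // twist_m pair_twist_perm phin qa qb.
Qed.

Lemma ker_phi_sub_N : 'ker phi \subset N.
Proof.
(* Clear the twists at corners k, ..., 6 one at a time with the pair twists
   (k, ord_max); the twist at ord_max is then forced by the zero sum. *)
suff reduce k g : g \in 'ker phi ->
    (forall d : 'I_8, (k <= d < 7)%N -> twist g d = 0) -> g \in N.
  by apply/subsetP => g Kg; apply: (reduce 7%N) => // d; rewrite leqNgt andNb.
elim: k g => [|k IHk] g Kg zero_g.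
  rewrite (ker_phi_eq1 Kg) ?group1 // => d d_max; apply: zero_g.
  by rewrite /= -ltnS ltn_neqAle ltn_ord andbT.
have [lt_k7 | ge_k7] := ltnP k 7; last first.
  apply: IHk => // d /andP[le_kd lt_d7].
  by have := leq_trans ge_k7 le_kd; rewrite leqNgt lt_d7.
pose j : 'I_8 := Ordinal (ltnW lt_k7 : (k < 8)%N).
have [e /setIP[Ne Ke] twist_e] := pair_twist_in_N j ord_max.
pose n := val (- twist g j).
have Ngen : (g * e ^+ n)%g \in N.
  apply: IHk => [|d /andP[le_kd lt_d7]]; first by rewrite groupM ?groupX.
  rewrite twist_kerM ?groupX ?(dom_ker Ke) // twist_kerX // twist_e /pair_twist.
  have d_max : (d == ord_max) = false.
    by apply/negbTE; rewrite -val_eqE /= ltn_eqF.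
  rewrite d_max subr0; have [-> | ne_dj] := eqVneq d j.
    by rewrite mulr1n natr_Zp addrN.
  rewrite mul0rn addr0 zero_g // lt_d7 andbT ltn_neqAle le_kd andbT.
  by apply: contra ne_dj => /eqP kd; apply/eqP/val_inj.
by rewrite -(mulgK (e ^+ n)%g g) groupM ?groupV ?groupX.
Qed.

End NormalSubgroup.

Theorem proposition2p8 (N : {group {perm sticker}}) :
  (N <| G2)%g -> (N :!=: 1)%g ->
  (phi @: N \isog [set: {perm 'I_8}])%g ->
  (N :=: G2)%g.
Proof.
move=> nsNG _ isoN. (* nontriviality of N follows from isoN *)
have sNG := normal_sub nsNG.
have sND : N \subset legal_perms := subset_trans sNG G2_legal.
have phiN : phi @* N = setT.
  rewrite -(morphimEsub _ sND) in isoN.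
  by apply/eqP; rewrite eqEcard subsetT (card_isog isoN) leqnn.
apply/eqP; rewrite eqEsubset sNG.
by rewrite -(morphimGK (ker_phi_sub_N nsNG phiN) sND) phiN morphpreT G2_legal.
Qed.
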